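(* There exist constants $\overline C>0$ and $0<\overline\theta<1$ such that for all $n\geq1$, all $j\in\{1,\dots,2p\}$, all $z\in\mathcal D_j$ and all $\alpha\neq\beta\in\mathscr W_n^j$, $$|\gamma_\alpha(z)-\gamma_\beta(z)|\geq\overline C\,\overline\theta^{\,r(\alpha,\beta)},$$ where $r(\alpha,\beta)=\max\{0\leq i\leq n:\ \alpha_k=\beta_k\text{ for all }k\leq i\}$.
   Context: Schottky setup: $\Gamma\subset PSL_2(\mathbb Z)$ is a non-elementary convex co-compact subgroup realized as a Schottky group: there are open Euclidean discs $\mathcal D_1,\dots,\mathcal D_{2p}\subset\mathbb C$ with centers on $\mathbb R$ and pairwise disjoint closures, and matrices $\gamma_1,\dots,\gamma_p\in SL_2(\mathbb Z)$ acting as Möbius maps with $\gamma_i(\mathcal D_i)=\widehat{\mathbb C}\setminus\overline{\mathcal D_{p+i}}$; $\Gamma$ is the free group they generate. Put $\gamma_{p+i}=\gamma_i^{-1}$ (indices mod $2p$); then $\gamma_i(\mathcal D_j)\subset\mathcal D_{p+i}$ for $j\neq i$. Let $\mathscr W_n$ be the set of $\alpha=(\alpha_1,\dots,\alpha_n)\in\{1,\dots,2p\}^n$ with $\alpha_{i+1}\neq\alpha_i+p\pmod{2p}$ for all $i$, $\mathscr W_n^j=\{\alpha\in\mathscr W_n:\alpha_n\neq j\}$, and $\gamma_\alpha=\gamma_{\alpha_1}\circ\cdots\circ\gamma_{\alpha_n}$; for $\alpha\in\mathscr W_n^j$, $\gamma_\alpha(\overline{\mathcal D_j})\subset\mathcal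 D_{p+\alpha_1}$. *)

From Stdlib Require Import Reals ZArith List Lia.
Open Scope R_scope.

Definition Cx : Type := (R * R)%type.
Definition Cadd (z w : Cx) : Cx := (fst z + fst w, snd z + snd w).
Definition Csub (z w : Cx) : Cx := (fst z - fst w, snd z - snd w).
Definition Cmul (z w : Cx) : Cx :=
  (fst z * fst w - snd z * snd w, fst z * snd w + snd z * fst w).
Definition Cinv (z : Cx) : Cx :=
  (fst z / (fst z ^ 2 + snd z ^ 2), - snd z / (fst z ^ 2 + snd z ^ 2)).
Definition Cdiv (z w : Cx) : Cx := Cmul z (Cinv w).
Definition Cnorm (z : Cx) : R := sqrt (fst z ^ 2 + snd z ^ 2).
Definition ofR (x : R) : Cx := (x, 0).
Definition ofZ (k : Z) : Cx := (IZR k, 0).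

(* (a, b, c, d) stands for the matrix [[a, b], [c, d]]. *)
Definition mat : Type := (Z * Z * Z * Z)%type.
Definition m_a (g : mat) : Z := fst (fst (fst g)).
Definition m_b (g : mat) : Z := snd (fst (fst g)).
Definition m_c (g : mat) : Z := snd (fst g).
Definition m_d (g : mat) : Z := snd g.
Definition det (g : mat) : Z := (m_a g * m_d g - m_b g * m_c g)%Z.
(* inverse of a determinant-one matrix *)
Definition matinv (g : mat) : mat := (m_d g, (- m_b g)%Z, (- m_c g)%Z, m_a g).

(* Moebius action on C (finite points; total division, used only where the
   denominator does not vanish). *)
Definition mobius (g : mat) (z : Cx) : Cx :=
  Cdiv (Cadd (Cmul (ofZ (m_a g)) z) (ofZ (m_b g)))
       (Cadd (Cmul (ofZ (m_c g)) z) (ofZ (m_d g))).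

(* Riemann sphere: None is the point at infinity. *)
Definition sphere : Type := option Cx.
Definition mobius_sphere (g : mat) (w : sphere) : sphere :=
  match w with
  | None => if Z.eqb (m_c g) 0 then None
            else Some (Cdiv (ofZ (m_a g)) (ofZ (m_c g)))
  | Some z =>
      if Req_EM_T (fst (Cadd (Cmul (ofZ (m_c g)) z) (ofZ (m_d g)))) 0 then
        if Req_EM_T (snd (Cadd (Cmul (ofZ (m_c g)) z) (ofZ (m_d g)))) 0
        then None else Some (mobius g z)
      else Some (mobius g z)
  end.

Definition in_disc (cen rad : nat -> R) (i : nat) (z : Cx) : Prop :=
  Cnorm (Csub z (ofR (cen i))) < rad i.
(* closure of the open disc (radius > 0) = closed disc *)
Definition in_cdisc (cen rad : nat -> R) (i : nat) (z : Cx) : Prop :=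
  Cnorm (Csub z (ofR (cen i))) <= rad i.
Definition in_cdisc_sphere (cen rad : nat -> R) (i : nat) (w : sphere) : Prop :=
  match w with None => False | Some z => in_cdisc cen rad i z end.

(* i + p (mod 2p), with representatives in {1,...,2p} *)
Definition opp_idx (p i : nat) : nat := if Nat.leb i p then (i + p)%nat else (i - p)%nat.
Definition valid_idx (p i : nat) : Prop := (1 <= i <= 2 * p)%nat.

(* gamma_1..gamma_p given by g; gamma_{p+i} = gamma_i^{-1} *)
Definition gen (p : nat) (g : nat -> mat) (i : nat) : mat :=
  if Nat.leb i p then g i else matinv (g (i - p)%nat).

Definition schottky (p : nat) (cen rad : nat -> R) (g : nat -> mat) : Prop :=
  (2 <= p)%nat /\   (* non-elementary: free group of rank >= 2 *)
  (forall i, valid_idx p i -> 0 < rad i) /\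
  (forall i j, valid_idx p i -> valid_idx p j -> i <> j ->
     forall z, ~ (in_cdisc cen rad i z /\ in_cdisc cen rad j z)) /\
  (forall i, (1 <= i <= p)%nat -> det (g i) = 1%Z) /\
  (* gamma_i(D_i) = hat C \ closure(D_{p+i}) *)
  (forall i, (1 <= i <= p)%nat ->
     forall w : sphere,
       (~ in_cdisc_sphere cen rad (p + i) w) <->
       (exists z, in_disc cen rad i z /\ mobius_sphere (g i) (Some z) = w)).

Fixpoint reduced (p : nat) (l : list nat) : Prop :=
  match l with
  | nil => True
  | a :: t =>
      valid_idx p a /\
      match t with
      | nil => True
      | b :: _ => b <> opp_idx p a
      end /\ reduced p t
  end.

Definition word (p n : nat) (a : list nat) : Prop := length a = n /\ reduced p a.
Definition word_j (p n j : nat) (a : list nat) : Prop :=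
  word p n a /\ last a 0%nat <> j.

Definition gamma_word (p : nat) (g : nat -> mat) (a : list nat) (z : Cx) : Cx :=
  fold_right (fun i w => mobius (gen p g i) w) z a.

Fixpoint common_prefix (a b : list nat) : nat :=
  match a, b with
  | x :: a', y :: b' => if Nat.eqb x y then S (common_prefix a' b') else 0%nat
  | _, _ => 0%nat
  end.

From Stdlib Require Import Reals List Lia Lra Classical.
From Coquelicot Require Import Coquelicot.
Open Scope R_scope.

(* A generator gamma = (a b; c d) of determinant one satisfies
   gamma z - gamma w = (z - w) / ((c z + d)(c w + d)), and on the bounded union of
   the discs its denominator is bounded by some M, so it shrinks distances there by
   at most kappa = M^-2.  By ping-pong, a reduced word applied to a point of D_j
   (last letter not j) lands in D_{p + first letter}.  If alpha and beta agree
   exactly up to index r, their tails after the common prefix send z into two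
   distinct discs, hence at distance at least the minimal gap delta between the
   discs, and the common prefix then shrinks this distance by at most kappa^r. *)

Definition mob_den (h : mat) (z : C) : C := (RtoC (IZR (m_c h)) * z + RtoC (IZR (m_d h)))%C.

Lemma mobius_C h z :
  mobius h z = ((RtoC (IZR (m_a h)) * z + RtoC (IZR (m_b h))) / mob_den h z)%C.
Proof. reflexivity. Qed.

Lemma det_C h : det h = 1%Z ->
  (RtoC (IZR (m_a h)) * RtoC (IZR (m_d h)) - RtoC (IZR (m_b h)) * RtoC (IZR (m_c h)))%C
  = RtoC 1.
Proof.
  unfold det; intro Hd.
  rewrite <- !RtoC_mult, <- RtoC_minus, <- !mult_IZR, <- minus_IZR, Hd.
  reflexivity.
Qed.

Lemma mobius_sub h (z w : C) : det h = 1%Z ->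
  mob_den h z <> RtoC 0 -> mob_den h w <> RtoC 0 ->
  (mobius h z - mobius h w = (z - w) / (mob_den h z * mob_den h w))%C.
Proof.
  intros Hd Hz Hw. rewrite !mobius_C. unfold mob_den in *.
  rewrite <- (Cmult_1_l (z - w)), <- (det_C h Hd). field. split; assumption.
Qed.

Lemma mob_den_matinv h z : det h = 1%Z -> mob_den h z <> RtoC 0 ->
  mob_den (matinv h) (mobius h z) = (/ mob_den h z)%C.
Proof.
  intros Hd Hz. rewrite mobius_C. unfold mob_den in *.
  change (m_c (matinv h)) with (- m_c h)%Z. change (m_d (matinv h)) with (m_a h).
  rewrite <- (Cmult_1_l (/ _)), <- (det_C h Hd), opp_IZR, RtoC_opp.
  field. assumption.
Qed.

Lemma mobius_matinv h z : det h = 1%Z -> mob_den h z <> RtoC 0 ->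
  mobius (matinv h) (mobius h z) = z :> C.
Proof.
  intros Hd Hz. rewrite (mobius_C (matinv h)), mob_den_matinv by assumption.
  rewrite mobius_C. unfold mob_den in *.
  change (m_a (matinv h)) with (m_d h). change (m_b (matinv h)) with (- m_b h)%Z.
  rewrite opp_IZR, RtoC_opp.
  transitivity (RtoC 1 * z)%C; [|apply Cmult_1_l].
  rewrite <- (det_C h Hd). field. assumption.
Qed.

Lemma mobius_sphere_cases h (z : Cx) :
  (mob_den h z = RtoC 0 /\ mobius_sphere h (Some z) = None) \/
  (mob_den h z <> RtoC 0 /\ mobius_sphere h (Some z) = Some (mobius h z)).
Proof.
  unfold mobius_sphere. change (Cadd (Cmul (ofZ (m_c h)) z) (ofZ (m_d h))) with (mob_den h z).
  destruct (mob_den h z) as [u v] eqn:E. simpl.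
  destruct (Req_EM_T u 0) as [->|Hu]; [destruct (Req_EM_T v 0) as [->|Hv]|].
  - left. split; reflexivity.
  - right. split; [intro H; injection H; intros; contradiction | reflexivity].
  - right. split; [intro H; injection H; intros; contradiction | reflexivity].
Qed.

Lemma mob_den_root h z : det h = 1%Z -> mob_den h z = RtoC 0 ->
  z = (- RtoC (IZR (m_d h)) / RtoC (IZR (m_c h)))%C :> C.
Proof.
  intros Hd Hz.
  assert (Hc : RtoC (IZR (m_c h)) <> RtoC 0).
  { intro Hc. apply RtoC_inj in Hc. apply eq_IZR in Hc.
    unfold mob_den in Hz. rewrite Hc, Cmult_0_l, Cplus_0_l in Hz. apply RtoC_inj, eq_IZR in Hz.
    unfold det in Hd. rewrite Hc, Hz in Hd. lia. }
  unfold mob_den in Hz.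
  transitivity (((RtoC (IZR (m_c h)) * z + RtoC (IZR (m_d h))) - RtoC (IZR (m_d h)))
                / RtoC (IZR (m_c h)))%C.
  - field. exact Hc.
  - rewrite Hz. field. exact Hc.
Qed.

Lemma mobius_sphere_inj h (z w : Cx) : det h = 1%Z ->
  mobius_sphere h (Some z) = mobius_sphere h (Some w) -> z = w.
Proof.
  intros Hd E.
  destruct (mobius_sphere_cases h z) as [[Dz Ez]|[Dz Ez]];
  destruct (mobius_sphere_cases h w) as [[Dw Ew]|[Dw Ew]];
  rewrite Ez, Ew in E; try discriminate.
  - rewrite (mob_den_root h z), (mob_den_root h w) by assumption. reflexivity.
  - assert (E' : mobius h z = mobius h w) by congruence.
    rewrite <- (mobius_matinv h z), <- (mobius_matinv h w), E' by assumption. reflexivity.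
Qed.

Lemma opp_idx_valid p i : valid_idx p i -> valid_idx p (opp_idx p i).
Proof. unfold valid_idx, opp_idx; intros; destruct (Nat.leb_spec i p); lia. Qed.

Lemma opp_idx_involutive p i : valid_idx p i -> opp_idx p (opp_idx p i) = i.
Proof.
  unfold valid_idx, opp_idx; intros.
  destruct (Nat.leb_spec i p); destruct (Nat.leb_spec (i + p) p);
  destruct (Nat.leb_spec (i - p) p); lia.
Qed.

Lemma opp_idx_inj p i j : valid_idx p i -> valid_idx p j ->
  opp_idx p i = opp_idx p j -> i = j.
Proof.
  intros Hi Hj E. rewrite <- (opp_idx_involutive p i Hi), E. apply opp_idx_involutive, Hj.
Qed.

Lemma det_matinv h : det (matinv h) = det h.
Proof. unfold det, matinv, m_a, m_b, m_c, m_d; simpl. ring. Qed.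

Lemma in_disc_cdisc cen rad i z : in_disc cen rad i z -> in_cdisc cen rad i z.
Proof. unfold in_disc, in_cdisc. lra. Qed.

Lemma finite_pos_bound (P : nat -> R -> Prop) (N : nat) :
  (forall i d d', 0 < d' <= d -> P i d -> P i d') ->
  (forall i, (i <= N)%nat -> exists d, 0 < d /\ P i d) ->
  exists d, 0 < d /\ forall i, (i <= N)%nat -> P i d.
Proof.
  intros Hmono Hex. induction N as [|N IH].
  - destruct (Hex 0%nat (le_n 0)) as [d [Hd HP]].
    exists d. split; [exact Hd|]. intros i Hi. replace i with 0%nat by lia. exact HP.
  - destruct IH as [d1 [Hd1 HP1]]; [intros i Hi; apply Hex; lia|].
    destruct (Hex (S N) (le_n _)) as [d2 [Hd2 HP2]].
    exists (Rmin d1 d2). split; [apply Rmin_glb_lt; assumption|].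
    intros i Hi. destruct (Nat.eq_dec i (S N)) as [->|Hne].
    + apply (Hmono _ d2); [split; [apply Rmin_glb_lt|apply Rmin_r]|]; assumption.
    + apply (Hmono _ d1); [split; [apply Rmin_glb_lt|apply Rmin_l]|]; try assumption.
      apply HP1. lia.
Qed.

Lemma finite_pos_bound2 (P : nat -> nat -> R -> Prop) (N : nat) :
  (forall i j d d', 0 < d' <= d -> P i j d -> P i j d') ->
  (forall i j, (i <= N)%nat -> (j <= N)%nat -> exists d, 0 < d /\ P i j d) ->
  exists d, 0 < d /\ forall i j, (i <= N)%nat -> (j <= N)%nat -> P i j d.
Proof.
  intros Hmono Hex.
  destruct (finite_pos_bound (fun i d => forall j, (j <= N)%nat -> P i j d) N)
    as [d [Hd HP]].
  - intros i d d' Hd HP j Hj. exact (Hmono i j d d' Hd (HP j Hj)).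
  - intros i Hi. apply finite_pos_bound; [apply Hmono|]. intros j Hj. apply Hex; assumption.
  - exists d. split; [exact Hd|]. intros i j Hi Hj. exact (HP i Hi j Hj).
Qed.

Lemma cmod_sub_ge_disc_gap c1 c2 r1 r2 (s t : C) :
  Cmod (s - RtoC c1) <= r1 -> Cmod (t - RtoC c2) <= r2 ->
  Rabs (c1 - c2) - r1 - r2 <= Cmod (s - t).
Proof.
  intros Hs Ht. rewrite <- Cmod_R, RtoC_minus.
  replace (RtoC c1 - RtoC c2)%C with (- (s - RtoC c1) + (s - t) + (t - RtoC c2))%C by ring.
  pose proof (Cmod_triangle (- (s - RtoC c1) + (s - t)) (t - RtoC c2)).
  pose proof (Cmod_triangle (- (s - RtoC c1)) (s - t)).
  rewrite Cmod_opp in *. lra.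
Qed.

Lemma cmod_le_center_radius c r (s : C) : Cmod (s - RtoC c) <= r -> Cmod s <= Rabs c + r.
Proof.
  intro Hs. rewrite <- Cmod_R.
  replace s with ((s - RtoC c) + RtoC c)%C at 1 by ring.
  pose proof (Cmod_triangle (s - RtoC c) (RtoC c)). lra.
Qed.

Lemma last_app_cons {A : Type} (pre l : list A) (x d : A) :
  last (pre ++ x :: l) d = last (x :: l) d.
Proof.
  induction pre as [|y [|z pre] IH]; [reflexivity..|]. exact IH.
Qed.

Lemma last_cons_neq p x u m : valid_idx p m -> last (x :: u) 0%nat <> m -> last u 0%nat <> m.
Proof. destruct u; [unfold valid_idx; simpl; lia | tauto]. Qed.

Lemma reduced_app_cons p pre x l : reduced p (pre ++ x :: l) ->
  reduced p pre /\ reduced p (x :: l) /\ last pre 0%nat <> opp_idx p x.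
Proof.
  induction pre as [|y pre IH]; simpl.
  - intro Hr. split; [exact I|]. split; [exact Hr|].
    pose proof (opp_idx_valid p x (proj1 Hr)). unfold valid_idx in *; lia.
  - intros (Hy & Hhd & Hr). destruct (IH Hr) as (Hpre & Hxl & Hlast).
    split; [split; [exact Hy|split; [|exact Hpre]]|split; [exact Hxl|]].
    + destruct pre; [exact I | exact Hhd].
    + destruct pre as [|z pre]; [|exact Hlast].
      simpl. intro E. apply Hhd. rewrite E, opp_idx_involutive by exact (proj1 Hxl).
      reflexivity.
Qed.

Lemma common_prefix_split (a b : list nat) : length a = length b -> a <> b ->
  exists pre x y a' b', a = pre ++ x :: a' /\ b = pre ++ y :: b' /\ x <> y /\
    common_prefix a b = length pre.
Proof.
  revert b. induction a as [|x a IH]; intros [|y b] Hl Hne; try discriminate; [congruence|].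
  destruct (Nat.eq_dec x y) as [<-|Hxy].
  - injection Hl as Hl.
    destruct (IH b Hl (fun E => Hne (f_equal _ E)))
      as (pre & x' & y' & a' & b' & -> & -> & Hx'y' & Hcp).
    exists (x :: pre), x', y', a', b'. simpl. rewrite Nat.eqb_refl, Hcp. auto.
  - exists nil, x, y, a, b. simpl. rewrite (proj2 (Nat.eqb_neq x y) Hxy). auto.
Qed.

Lemma gamma_word_app p g pre l z :
  gamma_word p g (pre ++ l) z = gamma_word p g pre (gamma_word p g l z).
Proof. apply fold_right_app. Qed.

Section Schottky.

Variables (p : nat) (cen rad : nat -> R) (g : nat -> mat).
Hypothesis HS : schottky p cen rad g.

Lemma det_gen i : valid_idx p i -> det (gen p g i) = 1%Z.
Proof.
  destruct HS as (_ & _ & _ & Hdet & _).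
  unfold gen, valid_idx; intro Hi. destruct (Nat.leb_spec i p).
  - apply Hdet; lia.
  - rewrite det_matinv. apply Hdet; lia.
Qed.

Lemma cdisc_disjoint i k S : valid_idx p i -> valid_idx p k -> i <> k ->
  in_cdisc cen rad k S -> ~ in_cdisc cen rad i S.
Proof.
  destruct HS as (_ & _ & Hdisj & _). intros Hi Hk Hik HkS HiS.
  exact (Hdisj i k Hi Hk Hik S (conj HiS HkS)).
Qed.

(* For i <= p this is the hypothesis gamma_i(D_i) = C^ \ closure D_(p+i) read
   backwards through injectivity (infinity lies outside the closed disc, so S is
   not a pole); for i > p, S = gamma_(i-p) z with z in D_(i-p), which gamma_i inverts. *)
Lemma gen_maps_complement i (S : Cx) : valid_idx p i -> ~ in_cdisc cen rad i S ->
  mob_den (gen p g i) S <> RtoC 0 /\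
  in_cdisc cen rad (opp_idx p i) (mobius (gen p g i) S).
Proof.
  intros Hi HSn. pose proof (det_gen i Hi) as Hd.
  destruct HS as (_ & _ & _ & _ & Hmap).
  unfold gen, opp_idx in *. destruct (Nat.leb_spec i p) as [Hle|Hgt].
  - assert (Hi' : (1 <= i <= p)%nat) by (unfold valid_idx in Hi; lia).
    assert (Hpre : forall w, ~ in_cdisc_sphere cen rad (p + i) w ->
                   mobius_sphere (g i) (Some S) <> w).
    { intros w Hw E. destruct (proj1 (Hmap i Hi' w) Hw) as [z [Hz Ez]].
      rewrite <- E in Ez. apply mobius_sphere_inj in Ez; [|exact Hd].
      subst z. exact (HSn (in_disc_cdisc _ _ _ _ Hz)). }
    destruct (mobius_sphere_cases (g i) S) as [[_ E]|[Hden E]].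
    + exfalso. exact (Hpre None (fun H => H) E).
    + split; [exact Hden|]. rewrite Nat.add_comm.
      apply NNPP. intro Hout. exact (Hpre (Some _) Hout E).
  - assert (Hk : (1 <= i - p <= p)%nat) by (unfold valid_idx in Hi; lia).
    replace i with (p + (i - p))%nat in HSn at 1 by lia.
    destruct (proj1 (Hmap (i - p)%nat Hk (Some S)) HSn) as [z [Hz Ez]].
    rewrite det_matinv in Hd.
    destruct (mobius_sphere_cases (g (i - p)%nat) z) as [[_ E]|[Hden E]];
      rewrite E in Ez; [discriminate|].
    assert (ES : S = mobius (g (i - p)%nat) z) by congruence. subst S.
    split.
    + rewrite mob_den_matinv by assumption.
      apply Cmod_gt_0. rewrite Cmod_inv by exact Hden.
      apply Rinv_0_lt_compat, Cmod_gt_0, Hden.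
    + rewrite mobius_matinv by assumption. exact (in_disc_cdisc _ _ _ _ Hz).
Qed.

Lemma cdisc_radii_gap i j : valid_idx p i -> valid_idx p j -> i <> j ->
  rad i + rad j < Rabs (cen i - cen j).
Proof.
  intros Hi Hj Hij. pose proof HS as (_ & Hrad & Hdisj & _).
  pose proof (Hrad i Hi). pose proof (Hrad j Hj).
  assert (Hreal : forall x c, Cnorm (Csub (ofR x) (ofR c)) = Rabs (x - c)).
  { intros x c. rewrite <- Cmod_R. unfold Cnorm, Cmod, Csub, ofR, RtoC; simpl.
    f_equal. ring. }
  (* otherwise cen j, or the point of D_i closest to cen j, lies in both closed discs *)
  apply Rnot_le_lt. intro Hle. apply (Hdisj i j Hi Hj Hij (ofR
    (if Rle_dec (Rabs (cen i - cen j)) (rad i) then cen j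
     else if Rle_dec (cen i) (cen j) then cen i + rad i else cen i - rad i))).
  unfold in_cdisc. rewrite !Hreal.
  destruct (Rle_dec (Rabs (cen i - cen j)) (rad i)) as [H1|H1];
  [|destruct (Rle_dec (cen i) (cen j)) as [H2|H2]];
  revert Hle H1; unfold Rabs; repeat destruct Rcase_abs; lra.
Qed.

Lemma cdiscs_separated : exists delta, 0 < delta /\
  forall i j (s t : Cx), valid_idx p i -> valid_idx p j -> i <> j ->
  in_cdisc cen rad i s -> in_cdisc cen rad j t -> delta <= Cmod (s - t).
Proof.
  destruct (finite_pos_bound2 (fun i j d => valid_idx p i -> valid_idx p j -> i <> j ->
    forall s t : Cx, in_cdisc cen rad i s -> in_cdisc cen rad j t -> d <= Cmod (s - t))
    (2 * p)) as [delta [Hdelta Hsep]].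
  - intros i j d d' Hd' HP Hi Hj Hij s t Hs Ht.
    pose proof (HP Hi Hj Hij s t Hs Ht). lra.
  - intros i j _ _.
    destruct (classic (valid_idx p i /\ valid_idx p j /\ i <> j)) as [(Hi & Hj & Hij)|Hn].
    + exists (Rabs (cen i - cen j) - rad i - rad j). split.
      * pose proof (cdisc_radii_gap i j Hi Hj Hij). lra.
      * intros _ _ _ s t. apply cmod_sub_ge_disc_gap.
    + exists 1. split; [lra|]. intros Hi Hj Hij. tauto.
  - exists delta. split; [exact Hdelta|].
    intros i j s t Hi Hj Hij Hs Ht.
    apply (Hsep i j); try assumption; unfold valid_idx in *; lia.
Qed.

Lemma mob_den_bounded : exists M, 0 < M /\
  forall i k (S : Cx), valid_idx p i -> valid_idx p k -> in_cdisc cen rad k S ->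
  Cmod (mob_den (gen p g i) S) <= M.
Proof.
  destruct (finite_pos_bound2 (fun i k d => forall S : Cx, in_cdisc cen rad k S ->
    Cmod (mob_den (gen p g i) S) <= / d) (2 * p)) as [d [Hd HM]].
  - intros i k d d' Hd' HP S HS'. eapply Rle_trans; [exact (HP S HS')|].
    apply Rinv_le_contravar; lra.
  - intros i k _ _.
    set (c := IZR (m_c (gen p g i))). set (e := IZR (m_d (gen p g i))).
    set (B := Rabs c * (Rabs (cen k) + rad k) + Rabs e).
    exists (/ (Rabs B + 1)). split.
    { apply Rinv_0_lt_compat. pose proof (Rabs_pos B). lra. }
    intros S HS'. rewrite Rinv_inv. unfold mob_den. fold c e.
    pose proof (Rmult_le_compat_l (Rabs c) _ _ (Rabs_pos c)
      (cmod_le_center_radius (cen k) (rad k) S HS')) as HcS.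
    pose proof (Cmod_triangle (RtoC c * S) (RtoC e)) as Htri.
    rewrite Cmod_mult, !Cmod_R in Htri.
    pose proof (Rle_abs B). unfold B in *. lra.
  - exists (/ d). split; [apply Rinv_0_lt_compat, Hd|].
    intros i k S Hi Hk. apply HM; unfold valid_idx in *; lia.
Qed.

Lemma gen_dist_lower : exists kappa, 0 < kappa /\
  forall x k k' (S T : Cx), valid_idx p x -> valid_idx p k -> valid_idx p k' ->
  k <> x -> k' <> x -> in_cdisc cen rad k S -> in_cdisc cen rad k' T ->
  kappa * Cmod (S - T) <= Cmod (mobius (gen p g x) S - mobius (gen p g x) T).
Proof.
  destruct mob_den_bounded as [M [HM Hbound]].
  exists (/ (M * M)). split; [apply Rinv_0_lt_compat, Rmult_lt_0_compat; exact HM|].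
  intros x k k' S T Hx Hk Hk' Hkx Hk'x HSk HTk.
  destruct (gen_maps_complement x S Hx (cdisc_disjoint x k S Hx Hk (not_eq_sym Hkx) HSk))
    as [DS _].
  destruct (gen_maps_complement x T Hx (cdisc_disjoint x k' T Hx Hk' (not_eq_sym Hk'x) HTk))
    as [DT _].
  pose proof (Hbound x k S Hx Hk HSk). pose proof (Hbound x k' T Hx Hk' HTk).
  apply Cmod_gt_0 in DS as DS'. apply Cmod_gt_0 in DT as DT'.
  rewrite mobius_sub, Cmod_div, Cmod_mult by (auto using det_gen, Cmult_neq_0).
  unfold Rdiv. rewrite Rmult_comm.
  apply Rmult_le_compat_l; [apply Cmod_ge_0|].
  apply Rinv_le_contravar; [apply Rmult_lt_0_compat; assumption|].
  apply Rmult_le_compat; lra.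
Qed.

Definition landing_disc (m : nat) (u : list nat) : nat :=
  match u with nil => m | x :: _ => opp_idx p x end.

Lemma landing_disc_neq_head x u m : valid_idx p m -> reduced p (x :: u) ->
  last (x :: u) 0%nat <> m -> landing_disc m u <> x.
Proof.
  intros Hm (Hx & Hhd & Hr) Hlast. destruct u as [|y u]; simpl.
  - intro E. apply Hlast. rewrite E. reflexivity.
  - intro E. apply Hhd. rewrite <- E. symmetry. apply opp_idx_involutive, (proj1 Hr).
Qed.

Lemma gamma_word_landing u m (s : Cx) : reduced p u -> valid_idx p m ->
  in_cdisc cen rad m s -> last u 0%nat <> m ->
  valid_idx p (landing_disc m u) /\
  in_cdisc cen rad (landing_disc m u) (gamma_word p g u s).
Proof.
  intros Hr Hm Hs. induction u as [|x u IH]; intro Hlast; [split; assumption|].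
  pose proof (landing_disc_neq_head x u m Hm Hr Hlast) as Hne.
  destruct Hr as (Hx & _ & Hr).
  destruct (IH Hr (last_cons_neq p x u m Hm Hlast)) as [Hv Hin].
  split; [apply opp_idx_valid, Hx|].
  exact (proj2 (gen_maps_complement x _ Hx (cdisc_disjoint x _ _ Hx Hv (not_eq_sym Hne) Hin))).
Qed.

Lemma gamma_word_dist_lower : exists kappa, 0 < kappa /\
  forall u m m' (s t : Cx), reduced p u -> valid_idx p m -> valid_idx p m' ->
  in_cdisc cen rad m s -> in_cdisc cen rad m' t ->
  last u 0%nat <> m -> last u 0%nat <> m' ->
  kappa ^ length u * Cmod (s - t) <= Cmod (gamma_word p g u s - gamma_word p g u t).
Proof.
  destruct gen_dist_lower as [kappa [Hk Hstep]].
  exists kappa. split; [exact Hk|].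
  intros u m m' s t Hr Hm Hm' Hs Ht. induction u as [|x u IH]; intros Hl Hl'.
  - simpl. lra.
  - pose proof (landing_disc_neq_head x u m Hm Hr Hl) as Hne.
    pose proof (landing_disc_neq_head x u m' Hm' Hr Hl') as Hne'.
    destruct Hr as (Hx & _ & Hr).
    apply (last_cons_neq p x u m Hm) in Hl. apply (last_cons_neq p x u m' Hm') in Hl'.
    destruct (gamma_word_landing u m s Hr Hm Hs Hl) as [Hv Hin].
    destruct (gamma_word_landing u m' t Hr Hm' Ht Hl') as [Hv' Hin'].
    simpl length. rewrite <- tech_pow_Rmult, Rmult_assoc.
    eapply Rle_trans; [|exact (Hstep x _ _ _ _ Hx Hv Hv' Hne Hne' Hin Hin')].
    apply Rmult_le_compat_l; [lra|]. exact (IH Hr Hl Hl').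
Qed.

End Schottky.

Theorem lemma4p4 (p : nat) (cen rad : nat -> R) (g : nat -> mat)
  (HS : schottky p cen rad g) :
  exists (Cb th : R), 0 < Cb /\ 0 < th < 1 /\
    forall (n j : nat) (z : Cx) (a b : list nat),
      (1 <= n)%nat -> valid_idx p j -> in_disc cen rad j z ->
      word_j p n j a -> word_j p n j b -> a <> b ->
      Cnorm (Csub (gamma_word p g a z) (gamma_word p g b z))
        >= Cb * th ^ (common_prefix a b).
Proof.
  destruct (gamma_word_dist_lower p cen rad g HS) as [kappa [Hkappa Hdist]].
  destruct (cdiscs_separated p cen rad g HS) as [delta [Hdelta Hsep]].
  (* kappa itself need not be below 1 *)
  pose proof (Rmin_r kappa (1 / 2)) as Hth1.
  assert (Hth0 : 0 < Rmin kappa (1 / 2)) by (apply Rmin_glb_lt; lra).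
  exists delta, (Rmin kappa (1 / 2)). split; [exact Hdelta|]. split; [lra|].
  intros n j z a b _ Hj Hz [[La Ra] Lasta] [[Lb Rb] Lastb] Hab.
  destruct (common_prefix_split a b (eq_trans La (eq_sym Lb)) Hab)
    as (pre & x & y & a' & b' & -> & -> & Hxy & ->).
  destruct (reduced_app_cons p pre x a' Ra) as (Rpre & Rxa & Lx).
  destruct (reduced_app_cons p pre y b' Rb) as (_ & Ryb & Ly).
  rewrite last_app_cons in Lasta, Lastb. apply in_disc_cdisc in Hz.
  destruct (gamma_word_landing p cen rad g HS (x :: a') j z Rxa Hj Hz Lasta) as [Vs Hs].
  destruct (gamma_word_landing p cen rad g HS (y :: b') j z Ryb Hj Hz Lastb) as [Vt Ht].
  simpl landing_disc in *.
  assert (Hopp : opp_idx p x <> opp_idx p y).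
  { intro E. apply Hxy, (opp_idx_inj p x y (proj1 Rxa) (proj1 Ryb) E). }
  pose proof (Hsep _ _ _ _ Vs Vt Hopp Hs Ht) as Hgap.
  pose proof (Hdist pre _ _ _ _ Rpre Vs Vt Hs Ht Lx Ly) as Hpre.
  rewrite !gamma_word_app. apply Rle_ge.
  eapply Rle_trans; [|exact Hpre]. rewrite Rmult_comm.
  apply Rmult_le_compat; try lra; [apply pow_le; lra|].
  apply pow_incr. split; [lra | apply Rmin_l].
Qed.
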